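(* Let $1\le k\le n$ and let $f:\mathbb{F}_2^n\to\mathbb{F}_2$ be a function of algebraic degree exactly $k$. Then \[\prod_{i=1}^{k}\Big(1-\frac{1}{2^i}\Big)\le\mathrm{dt}_k(f)\le\frac12\Big(1-\frac{1}{2^n}\Big)^{k-1}.\] Moreover, the lower bound is attained if and only if $f\sim_{k-1}x_1\cdots x_k$.
   Context: $\oplus$ denotes addition in $\mathbb{F}_2$ and $\mathbb{F}_2^n$. The algebraic degree $\deg(f)$ of $f:\mathbb{F}_2^n\to\mathbb{F}_2$ is the degree of its algebraic normal form (the unique polynomial over $\mathbb{F}_2$ of degree at most one in each variable representing $f$). For $1\le k\le n$, \[\mathrm{dt}_k(f)=\frac{\big|\{(u_0,\dots,u_k)\in(\mathbb{F}_2^n)^{k+1}:\ \bigoplus_{c_1,\dots,c_k\in\mathbb{F}_2} f\big((\bigoplus_{i=1}^k c_iu_i)\oplus u_0\big)\neq0\}\big|}{2^{(k+1)n}}.\] For $M\in GL(n,\mathbb{F}_2)$, $v\in\mathbb{F}_2^n$, $\varphi_{M,v}(x)=Mx\oplus v$; $f\sim g$ means $g=f\circ\varphi_{M,v}$ for some such $M,v$; and $f\sim_{k-1}g$ means there is $h$ with $f\sim h$ and $\deg(g\oplus h)\le k-1$. *)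

From HB Require Import structures.
From mathcomp Require Import all_boot all_order all_algebra.
Set Implicit Arguments. Unset Strict Implicit. Unset Printing Implicit Defensive.
Import Order.TTheory GRing.Theory Num.Theory.
Local Open Scope ring_scope.

Notation vec n := 'cV['F_2]_n.
Notation boolfun n := (vec n -> 'F_2).

(* f is represented by the polynomial (ANF)
   sum_{S} a_S prod_{i in S} x_i  with all monomials of degree <= d.
   By uniqueness of the ANF this says deg(f) <= d. *)
Definition anf_eval n (a : {set 'I_n} -> 'F_2) (x : vec n) : 'F_2 :=
  \sum_(S : {set 'I_n}) a S * \prod_(i in S) x i 0.

Definition deg_le n (f : boolfun n) (d : nat) : Prop :=
  exists a : {set 'I_n} -> 'F_2,
    (forall S, a S != 0 -> (#|S| <= d)%N) /\ (forall x, f x = anf_eval a x).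

Definition deg_eq n (f : boolfun n) (d : nat) : Prop :=
  deg_le f d /\ ~ deg_le f d.-1.

Definition kder n k (f : boolfun n) (u0 : vec n) (u : {ffun 'I_k -> vec n}) : 'F_2 :=
  \sum_(c : {ffun 'I_k -> 'F_2}) f (\sum_(i < k) c i *: u i + u0).

Definition dt n k (f : boolfun n) : rat :=
  (#|[set p : vec n * {ffun 'I_k -> vec n} | kder f p.1 p.2 != 0]|)%:R
  / (2 ^ ((k.+1) * n))%:R.

Definition affeq n (f g : boolfun n) : Prop :=
  exists (M : 'M['F_2]_n) (v : vec n),
    M \in unitmx /\ forall x, g x = f (M *m x + v).

Definition affeq_mod n (d : nat) (f g : boolfun n) : Prop :=
  exists h : boolfun n, affeq f h /\ deg_le (fun x => g x + h x) d.

(* the monomial x_1 ... x_k (0-indexed: coordinates 0..k-1) *)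
Definition monom n (k : nat) : boolfun n :=
  fun x => \prod_(i < n | (i < k)%N) x i 0.

From HB Require Import structures.
From mathcomp Require Import all_boot all_order all_algebra perm.
From mathcomp Require Import ring.
Set Implicit Arguments. Unset Strict Implicit. Unset Printing Implicit Defensive.
Import Order.TTheory GRing.Theory Num.Theory.
Local Open Scope ring_scope.

(* The k-th order derivative kder f u0 u is the iterate of the first
   derivatives D_v g (x) = g (x + v) + g x (kder_cons), so we work with
   deg_lt k g := "all k-th order derivatives of g vanish" and identify it with
   the ANF degree (deg_leP), using that the ANF coefficient of prod_(i in S) x_i
   is the #|S|-th derivative at 0 along the basis vectors e_i, i in S (coef).
   Counting gives dt_(k+1)(g) = 2^-n sum_v dt_k(D_v g) (dt_succ).
   For g of degree exactly k, the directions v for which D_v g has degree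
   < k - 1 form a subgroup V(g); for v outside it V(D_v g) contains V(g) and
   V(g) + v. Induction on k then gives |V(g)| 2^k <= 2^n (card_lowdirs_le)
   and dt_k(g) >= prod_(i=1..k) (1 - 2^-i), with equality iff
   |V(g)| 2^k = 2^n (dt_lower). The upper bound follows from the same
   recursion (dt_upper). Finally |V(f)| = 2^(n-k) holds iff f ~_(k-1) x_1...x_k
   (card_lowdirs_affeq, affeq_card_lowdirs): in coordinates where
   e_k, ..., e_(n-1) lie in V(f), x_1 ... x_k is the only monomial of degree k. *)

Lemma F2_cases (x : 'F_2) : x = 0 \/ x = 1.
Proof. by case: x => [[|[|m]] Hm]; [left|right|]; try apply/val_inj. Qed.

Lemma F2_addxx (x : 'F_2) : x + x = 0.
Proof. exact/addrr_pchar2/pchar_Fp. Qed.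

Lemma F2_neq0 (x : 'F_2) : x != 0 -> x = 1.
Proof. by case: (F2_cases x) => ->. Qed.

Lemma F2_addI (a b : 'F_2) : a + b = 0 -> a = b.
Proof. by move=> H; rewrite -[a]addr0 -(F2_addxx b) addrA H add0r. Qed.

Lemma F2_add_cancel (a b c d : 'F_2) : (a + b) + (c + d) + (a + c) = b + d.
Proof.
by case: (F2_cases a) => ->; case: (F2_cases b) => ->; case: (F2_cases c) => ->;
  case: (F2_cases d) => ->; apply/val_inj.
Qed.

Lemma sum_F2 (R : zmodType) (F : 'F_2 -> R) : \sum_(b : 'F_2) F b = F 0 + F 1.
Proof.
rewrite /= big_ord_recl big_ord_recl big_ord0 addr0.
by congr (F _ + F _); apply/val_inj.
Qed.

Lemma vec_addxx n (v : vec n) : v + v = 0.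
Proof. by apply/matrixP => i j; rewrite !mxE F2_addxx. Qed.

Lemma vec_addK n (v w : vec n) : v + w + w = v.
Proof. by rewrite -addrA vec_addxx addr0. Qed.

Lemma card_vec n : #|{: vec n}| = (2 ^ n)%N.
Proof. by rewrite card_mx card_Fp // muln1. Qed.

Section FinfunCons.
Variable T : finType.

Definition fcons k (t : T) (u : {ffun 'I_k -> T}) : {ffun 'I_k.+1 -> T} :=
  [ffun i => if unlift ord0 i is Some j then u j else t].

Definition ftail k (u : {ffun 'I_k.+1 -> T}) : {ffun 'I_k -> T} :=
  [ffun j => u (lift ord0 j)].

Lemma fcons0 k t (u : {ffun 'I_k -> T}) : fcons t u ord0 = t.
Proof. by rewrite ffunE unlift_none. Qed.

Lemma fconsS k t (u : {ffun 'I_k -> T}) j : fcons t u (lift ord0 j) = u j.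
Proof. by rewrite ffunE liftK. Qed.

Lemma ftail_fcons k t (u : {ffun 'I_k -> T}) : ftail (fcons t u) = u.
Proof. by apply/ffunP => j; rewrite ffunE fconsS. Qed.

Lemma fcons_eta k (u : {ffun 'I_k.+1 -> T}) : fcons (u ord0) (ftail u) = u.
Proof. by apply/ffunP => i; rewrite ffunE; case: unliftP => [j ->|->]; rewrite ?ffunE. Qed.

Lemma big_ffun_cons (R : Type) (idx : R) (op : Monoid.com_law idx) k
    (F : {ffun 'I_k.+1 -> T} -> R) :
  \big[op/idx]_(u : {ffun 'I_k.+1 -> T}) F u =
  \big[op/idx]_(t : T) \big[op/idx]_(u : {ffun 'I_k -> T}) F (fcons t u).
Proof.
rewrite pair_big /= (reindex (fun p : T * {ffun 'I_k -> T} => fcons p.1 p.2)) /=.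
  by apply: eq_bigr => -[t u] _.
exists (fun u : {ffun 'I_k.+1 -> T} => (u ord0, ftail u)) => [[t u] _|u _] /=.
  by rewrite fcons0 ftail_fcons.
by rewrite fcons_eta.
Qed.

Lemma big_ffun_nil (R : Type) (idx : R) (op : Monoid.com_law idx)
    (F : {ffun 'I_0 -> T} -> R) (u0 : {ffun 'I_0 -> T}) :
  \big[op/idx]_(u : {ffun 'I_0 -> T}) F u = F u0.
Proof. by rewrite (big_pred1 u0) // => u /=; apply/esym/eqP/ffunP => -[]. Qed.

End FinfunCons.

Section Derivatives.
Variable n : nat.
Implicit Types (g h : boolfun n) (v w x : vec n).

Definition dder v g : boolfun n := fun x => g (x + v) + g x.

Definition deg_lt k g : Prop :=
  forall (u0 : vec n) (u : {ffun 'I_k -> vec n}), kder g u0 u = 0.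

Lemma kder_nil g u0 (u : {ffun 'I_0 -> vec n}) : kder g u0 u = g u0.
Proof. by rewrite /kder (big_ffun_nil _ _ [ffun => 0]) big_ord0 add0r. Qed.

Lemma kder_cons k g u0 v (u : {ffun 'I_k -> vec n}) :
  kder g u0 (fcons v u) = kder (dder v g) u0 u.
Proof.
rewrite /kder big_ffun_cons sum_F2 -big_split /=; apply: eq_bigr => c _.
rewrite !big_ord_recl !fcons0 scale0r scale1r add0r /dder addrC.
have tailE b : \sum_(i < k) fcons b c (lift ord0 i) *: fcons v u (lift ord0 i)
               = \sum_(i < k) c i *: u i.
  by apply: eq_bigr => i _; rewrite !fconsS.
by rewrite !tailE -addrA [v + _]addrC.
Qed.

Lemma kder_head k g u0 (u : {ffun 'I_k.+1 -> vec n}) :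
  kder g u0 u = kder (dder (u ord0) g) u0 (ftail u).
Proof. by rewrite -kder_cons fcons_eta. Qed.

Lemma kder_ext k g h u0 (u : {ffun 'I_k -> vec n}) :
  (forall x, g x = h x) -> kder g u0 u = kder h u0 u.
Proof. by move=> E; apply: eq_bigr => c _; rewrite E. Qed.

Lemma kderD k g h u0 (u : {ffun 'I_k -> vec n}) :
  kder (fun x => g x + h x) u0 u = kder g u0 u + kder h u0 u.
Proof. by rewrite /kder big_split. Qed.

Lemma kderM k a g u0 (u : {ffun 'I_k -> vec n}) :
  kder (fun x => a * g x) u0 u = a * kder g u0 u.
Proof. by rewrite /kder mulr_sumr. Qed.

Lemma kder_sum (I : finType) k (F : I -> boolfun n) u0 (u : {ffun 'I_k -> vec n}) :
  kder (fun x => \sum_(i : I) F i x) u0 u = \sum_(i : I) kder (F i) u0 u.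
Proof. by rewrite /kder exchange_big. Qed.

Lemma kder0 k u0 (u : {ffun 'I_k -> vec n}) : kder (fun _ => 0) u0 u = 0.
Proof. by rewrite /kder big1. Qed.

Lemma kder_affine k g (M : 'M['F_2]_n) w u0 (u : {ffun 'I_k -> vec n}) :
  kder (fun x => g (M *m x + w)) u0 u = kder g (M *m u0 + w) [ffun i => M *m u i].
Proof.
apply: eq_bigr => c _; congr (g _).
rewrite mulmxDr addrA mulmx_sumr; congr (_ + _ + _).
by apply: eq_bigr => i _; rewrite ffunE scalemxAr.
Qed.

Lemma deg_lt_ext k g h : (forall x, g x = h x) -> deg_lt k g -> deg_lt k h.
Proof. by move=> E Hg u0 u; rewrite -(kder_ext _ _ E). Qed.

Lemma deg_ltD k g h : deg_lt k g -> deg_lt k h -> deg_lt k (fun x => g x + h x).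
Proof. by move=> Hg Hh u0 u; rewrite kderD Hg Hh addr0. Qed.

Lemma deg_ltM k a g : deg_lt k g -> deg_lt k (fun x => a * g x).
Proof. by move=> Hg u0 u; rewrite kderM Hg mulr0. Qed.

Lemma deg_lt_sum (I : finType) k (F : I -> boolfun n) :
  (forall i, deg_lt k (F i)) -> deg_lt k (fun x => \sum_(i : I) F i x).
Proof. by move=> H u0 u; rewrite kder_sum big1 // => i _; apply: H. Qed.

Lemma deg_lt0f k : deg_lt k (fun _ => 0).
Proof. by move=> u0 u; rewrite kder0. Qed.

Lemma deg_lt0 g : deg_lt 0 g <-> forall x, g x = 0.
Proof.
split=> [H x|H u0 u]; last by rewrite kder_nil.
by rewrite -(kder_nil g x [ffun => 0]) H.
Qed.

Lemma deg_ltS k g : deg_lt k.+1 g <-> forall v, deg_lt k (dder v g).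
Proof.
split=> [H v u0 u|H u0 u]; first by rewrite -kder_cons H.
by rewrite kder_head H.
Qed.

Lemma deg_lt_affine k g (M : 'M['F_2]_n) w :
  deg_lt k g -> deg_lt k (fun x => g (M *m x + w)).
Proof. by move=> Hg u0 u; rewrite kder_affine. Qed.

Lemma deg_lt_translate k g w : deg_lt k g -> deg_lt k (fun x => g (x + w)).
Proof.
by move=> /(deg_lt_affine 1%:M w); apply: deg_lt_ext => x; rewrite mul1mx.
Qed.

Lemma deg_lt_affine_inv k g (M : 'M['F_2]_n) w : M \in unitmx ->
  deg_lt k (fun x => g (M *m x + w)) -> deg_lt k g.
Proof.
move=> Mu H u0 u.
have := H (invmx M *m (u0 - w)) [ffun i => invmx M *m u i].
rewrite kder_affine mulKVmx // subrK.
suff -> : [ffun i => M *m [ffun j => invmx M *m u j] i] = u by [].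
by apply/ffunP => i; rewrite !ffunE mulKVmx.
Qed.

Lemma deg_lt_dder k g v : deg_lt k g -> deg_lt k (dder v g).
Proof. by move=> Hg; apply: deg_ltD => //; apply: deg_lt_translate. Qed.

Lemma deg_lt_leq k k' g : (k <= k')%N -> deg_lt k g -> deg_lt k' g.
Proof.
move=> /subnK <-; elim: (k' - k)%N => [|j IH] Hg //=.
by rewrite addSn; apply/deg_ltS => v; apply/deg_lt_dder/IH.
Qed.

Lemma dderD v w g x : dder (v + w) g x = dder v g (x + w) + dder w g x.
Proof.
rewrite /dder [v + w]addrC addrA -!addrA; congr (_ + _).
by rewrite addrA F2_addxx add0r.
Qed.

Lemma dder_twice v g x : dder v (dder v g) x = 0.
Proof.
rewrite /dder vec_addK; set a := g x; set b := g (x + v).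
by rewrite addrA -(addrA a) F2_addxx addr0 F2_addxx.
Qed.

Lemma dderC v w g x : dder v (dder w g) x = dder w (dder v g) x.
Proof.
rewrite /dder [x + v + w]addrAC.
set a := g (x + w + v); set b := g (x + v); set c := g (x + w).
by rewrite -!addrA; congr (_ + _); rewrite !addrA [b + c]addrC.
Qed.

Lemma dder0 g x : dder 0 g x = 0.
Proof. by rewrite /dder addr0 F2_addxx. Qed.

Lemma deg_lt1_const g : deg_lt 1 g -> forall x, g x = g 0.
Proof.
move/deg_ltS => H x; move/deg_lt0: (H x) => /(_ 0).
by rewrite /dder add0r => /F2_addI.
Qed.

End Derivatives.

(* Differentiating along distinct basis vectors
   e_{s 0}, ..., e_{s (k-1)} at 0 extracts the ANF coefficient of the
   monomial indexed by {s 0, ..., s (k-1)}; this gives existence and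
   uniqueness of the ANF and the coefficient function coef. *)
Section ANF.
Variable n : nat.
Implicit Types (g h : boolfun n) (x : vec n) (S T : {set 'I_n}).

Definition monomial S : boolfun n := fun x => \prod_(i in S) x i 0.

Definition basis_dirs k (s : 'I_k -> 'I_n) : {ffun 'I_k -> vec n} :=
  [ffun i => delta_mx (s i) 0].

Lemma dder_monomial j S x :
  dder (delta_mx j 0) (monomial S) x = if j \in S then monomial (S :\ j) x else 0.
Proof.
rewrite /dder /monomial; case: ifP => jS.
  rewrite !(big_setD1 _ jS) /= !mxE eqxx /= mulrDl mul1r.
  have -> : \prod_(i in S :\ j) (x + delta_mx j 0) i 0 = \prod_(i in S :\ j) x i 0.
    apply: eq_bigr => i; rewrite !inE !mxE => /andP[/negbTE -> _].
    by rewrite addr0.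
  by rewrite addrC addrA F2_addxx add0r.
have -> : \prod_(i in S) (x + delta_mx j 0) i 0 = \prod_(i in S) x i 0.
  apply: eq_bigr => i iS; rewrite !mxE.
  have ij : i != j by apply: contraFN jS => /eqP <-.
  by rewrite (negbTE ij) addr0.
by rewrite F2_addxx.
Qed.

Lemma imset_ord_cons k (s : 'I_k.+1 -> 'I_n) :
  [set s i | i : 'I_k.+1] = s ord0 |: [set s (lift ord0 j) | j : 'I_k].
Proof.
apply/setP => y; rewrite !inE; apply/imsetP/idP.
  case=> i _ ->; case: (unliftP ord0 i) => [j ->|->]; last by rewrite eqxx.
  by apply/orP; right; apply/imsetP; exists j.
case/orP=> [/eqP ->|/imsetP [j _ ->]]; first by exists ord0.
by exists (lift ord0 j).
Qed.

Lemma kder_monomial k (s : 'I_k -> 'I_n) S : injective s ->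
  kder (monomial S) 0 (basis_dirs s) = (S == [set s i | i : 'I_k])%:R.
Proof.
elim: k s S => [|k IH] s S sinj.
  rewrite kder_nil /monomial.
  have -> : [set s i | i : 'I_0] = set0.
    by apply/setP => y; rewrite inE; apply/negbTE/imsetP => -[[]].
  case: (set_0Vmem S) => [->|[i iS]]; first by rewrite big_set0 eqxx.
  rewrite (big_setD1 _ iS) /= mxE mul0r.
  by have /negbTE -> : S != set0 by apply/set0Pn; exists i.
rewrite kder_head ffunE.
have -> : ftail (basis_dirs s) = basis_dirs (fun j => s (lift ord0 j)).
  by apply/ffunP => j; rewrite !ffunE.
have sinj' : injective (fun j => s (lift ord0 j)) by move=> a b /sinj /lift_inj.
have s0_notin : s ord0 \notin [set s (lift ord0 j) | j : 'I_k].
  by apply/imsetP => -[j _ /sinj E]; have := neq_lift ord0 j; rewrite -E eqxx.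
rewrite (kder_ext _ _ (dder_monomial (s ord0) S)) imset_ord_cons.
have -> : (S == s ord0 |: [set s (lift ord0 j) | j : 'I_k]) =
          (s ord0 \in S) && (S :\ s ord0 == [set s (lift ord0 j) | j : 'I_k]).
  apply/idP/idP => [/eqP ->|/andP [s0S /eqP <-]]; last by rewrite setD1K.
  by rewrite setU11 /= setU1K.
by case: (s ord0 \in S); rewrite ?IH ?kder0.
Qed.

Lemma kder_anf k (s : 'I_k -> 'I_n) a : injective s ->
  kder (anf_eval a) 0 (basis_dirs s) = a [set s i | i : 'I_k].
Proof.
move=> sinj; rewrite (kder_sum (fun S x => a S * monomial S x)).
rewrite (bigD1 [set s i | i : 'I_k]) //= big1 ?addr0.
  by rewrite kderM (kder_monomial _ sinj) eqxx mulr1.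
by move=> S /negbTE HS; rewrite kderM (kder_monomial _ sinj) HS mulr0.
Qed.

Lemma enum_set S m : #|S| = m ->
  exists s : 'I_m -> 'I_n, injective s /\ [set s i | i : 'I_m] = S.
Proof.
move=> e; exists (fun i => enum_val (cast_ord (esym e) i)); split.
  by move=> i j /enum_val_inj /cast_ord_inj.
apply/setP => x; apply/imsetP/idP => [[i _ ->]|xS]; first exact: enum_valP.
by exists (cast_ord e (enum_rank_in xS x)); rewrite // cast_ordK enum_rankK_in.
Qed.

Lemma enum_set_from S m (x : 'I_n) : #|S| = m.+1 -> x \in S ->
  exists s : 'I_m.+1 -> 'I_n,
    [/\ injective s, [set s i | i : 'I_m.+1] = S & s ord0 = x].
Proof.
move=> e xS; have [s [sinj sS]] := enum_set e.
have /imsetP [j _ xE] : x \in [set s i | i : 'I_m.+1] by rewrite sS.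
exists (fun i => s (tperm ord0 j i)); split.
- by move=> a b /sinj /perm_inj.
- rewrite -sS; apply/setP => y; apply/imsetP/imsetP => -[i _ ->].
    by exists (tperm ord0 j i).
  by exists (tperm ord0 j i); rewrite ?tpermK.
- by rewrite tpermL.
Qed.

Definition coef g S : 'F_2 :=
  kder g 0 (basis_dirs (enum_val : 'I_#|S| -> 'I_n)).

Lemma imset_enum_val S : [set enum_val i | i : 'I_#|S|] = S.
Proof.
apply/setP => x; apply/imsetP/idP => [[i _ ->]|xS]; first exact: enum_valP.
by exists (enum_rank_in xS x); rewrite ?enum_rankK_in.
Qed.

Lemma coef_anf a S : coef (anf_eval a) S = a S.
Proof. by rewrite /coef kder_anf ?imset_enum_val //; apply: enum_val_inj. Qed.

(* Existence of the ANF: a -> anf_eval a is injective between sets of the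
   same size 2^(2^n), hence onto. *)
Lemma anf_exists g : exists a : {set 'I_n} -> 'F_2, forall x, g x = anf_eval a x.
Proof.
pose F (a : {ffun {set 'I_n} -> 'F_2}) := [ffun x : vec n => anf_eval a x].
have Finj : injective F.
  move=> a b /ffunP E; apply/ffunP => S; rewrite -(coef_anf a) -(coef_anf b).
  by apply: kder_ext => x; have := E x; rewrite !ffunE.
have := inj_card_onto Finj _ [ffun x => g x].
have card_sets : #|{: {set 'I_n}}| = (2 ^ n)%N.
  by rewrite -cardsT -powersetT card_powerset cardsT card_ord.
rewrite !card_ffun card_sets card_vec leqnn => /(_ isT) /codomP [a /ffunP Ea].
by exists a => x; have := Ea x; rewrite !ffunE.
Qed.

Lemma anf_coef g x : g x = anf_eval (coef g) x.
Proof.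
have [a Ea] := anf_exists g; rewrite Ea; apply: eq_bigr => S _.
by rewrite -(coef_anf a S) /coef (kder_ext _ _ Ea).
Qed.

Lemma coef_kder k g (s : 'I_k -> 'I_n) : injective s ->
  kder g 0 (basis_dirs s) = coef g [set s i | i : 'I_k].
Proof. by move=> sinj; rewrite (kder_ext _ _ (anf_coef g)) kder_anf. Qed.

Lemma coef_ext g h S : (forall x, g x = h x) -> coef g S = coef h S.
Proof. exact: kder_ext. Qed.

Lemma coefD g h S : coef (fun x => g x + h x) S = coef g S + coef h S.
Proof. exact: kderD. Qed.

Lemma coef_monomial T S : coef (monomial T) S = (T == S)%:R.
Proof. by rewrite /coef kder_monomial ?imset_enum_val //; apply: enum_val_inj. Qed.

Lemma coef_dder_deg_lt h S m j : #|S| = m.+1 -> j \in S ->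
  deg_lt m (dder (delta_mx j 0) h) -> coef h S = 0.
Proof.
move=> cS jS Hj; have [s [sinj <- s0]] := enum_set_from cS jS.
by rewrite -coef_kder // kder_head ffunE s0 Hj.
Qed.

End ANF.

Section Degree.
Variable n : nat.
Implicit Types (g h : boolfun n) (w x : vec n) (S : {set 'I_n}).

Lemma dder_mul_var (i : 'I_n) w g x :
  w i 0 * g (x + w) + x i 0 * dder w g x = dder w (fun y => y i 0 * g y) x.
Proof. by rewrite /dder !mxE; ring. Qed.

Lemma deg_lt_mul_var m (i : 'I_n) g :
  deg_lt m g -> deg_lt m.+1 (fun x => x i 0 * g x).
Proof.
elim: m g => [|m IH] g Hg; apply/deg_ltS => w; apply: deg_lt_ext (dder_mul_var i w g) _;
  apply: deg_ltD; try by apply/deg_ltM/deg_lt_translate.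
  by apply/deg_lt0 => x; move/deg_lt0: Hg => g0; rewrite /dder !g0 addr0 mulr0.
by apply: IH; move/deg_ltS: Hg.
Qed.

Lemma deg_lt_monomial S : deg_lt #|S|.+1 (monomial S).
Proof.
move: {2}#|S| (erefl #|S|) => m; elim: m S => [|m IH] S cS.
  have -> : S = set0 by apply/eqP; rewrite -cards_eq0 cS.
  rewrite cards0; apply/deg_ltS => v; apply/deg_lt0 => x.
  by rewrite /dder /monomial !big_set0 F2_addxx.
have [i iS] : exists i, i \in S by apply/set0Pn; rewrite -card_gt0 cS.
have cSi : #|S :\ i| = m by move: cS; rewrite (cardsD1 i S) iS add1n => -[].
apply: (@deg_lt_ext _ _ (fun x => x i 0 * monomial (S :\ i) x)).
  by move=> x; rewrite /monomial (big_setD1 _ iS).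
by rewrite (cardsD1 i S) iS add1n; apply/deg_lt_mul_var/IH.
Qed.

Lemma coef_deg_lt g d S : deg_lt d.+1 g -> (d < #|S|)%N -> coef g S = 0.
Proof. by move=> Hg HS; apply: (deg_lt_leq HS Hg). Qed.

Lemma deg_le_coef g d : (forall S, (d < #|S|)%N -> coef g S = 0) -> deg_le g d.
Proof.
move=> H; exists (coef g); split; last exact: anf_coef.
by move=> S; apply: contraNT; rewrite -ltnNge => /H ->.
Qed.

Lemma deg_leP g d : deg_le g d <-> deg_lt d.+1 g.
Proof.
split=> [[a [Ha Eg]]|Hg]; last by apply: deg_le_coef => S; apply: coef_deg_lt.
apply: (@deg_lt_ext _ _ (anf_eval a)); first by move=> x; rewrite Eg.
apply: (@deg_lt_sum _ _ _ (fun S x => a S * monomial S x)) => S.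
case: (eqVneq (a S) 0) => [->|/Ha HS].
  by apply: (@deg_lt_ext _ _ (fun _ => 0)) => [x|]; [rewrite mul0r | exact: deg_lt0f].
by apply: deg_ltM; apply: (@deg_lt_leq _ #|S|.+1); last exact: deg_lt_monomial.
Qed.

End Degree.

Section Density.
Variable n : nat.
Implicit Types (g : boolfun n) (v x : vec n).

Lemma pow2_gt0 m : (0 : rat) < (2 ^ m)%:R.
Proof. by rewrite ltr0n expn_gt0. Qed.

Definition nz_count k g : nat :=
  \sum_(x : vec n) \sum_(u : {ffun 'I_k -> vec n}) (kder g x u != 0%R).

Lemma dtE k g : dt k g = (nz_count k g)%:R / (2 ^ (k.+1 * n))%:R.
Proof.
rewrite /dt /nz_count -sum1_card big_mkcond pair_big /=; congr (_%:R / _).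
by apply: eq_bigr => -[x u] _; rewrite inE /=; case: (_ != 0).
Qed.

Lemma nz_count_succ k g : nz_count k.+1 g = (\sum_v nz_count k (dder v g))%N.
Proof.
rewrite /nz_count [RHS]exchange_big /=; apply: eq_bigr => x _.
rewrite big_ffun_cons; apply: eq_bigr => v _.
by apply: eq_bigr => u _; rewrite kder_cons.
Qed.

Lemma dt_succ k g : dt k.+1 g = 1 / (2 ^ n)%:R * \sum_v dt k (dder v g).
Proof.
rewrite !dtE nz_count_succ natr_sum mulr_suml mulr_sumr; apply: eq_bigr => v _.
by rewrite dtE mulSn expnD natrM invfM mul1r mulrCA.
Qed.

Lemma dt_deg_lt k g : deg_lt k g -> dt k g = 0.
Proof.
move=> Hg; rewrite dtE /nz_count big1 ?mul0r // => x _.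
by rewrite big1 // => u _; rewrite Hg eqxx.
Qed.

Lemma dt0_nonzero g : (forall x, g x != 0) -> dt 0 g = 1.
Proof.
move=> gnz; rewrite dtE /nz_count (eq_bigr (fun _ => 1%N)) => [|x _].
  by rewrite sum1_card card_vec mul1n divff // gt_eqF // pow2_gt0.
by rewrite (big_ffun_nil _ _ [ffun => 0]) kder_nil gnz.
Qed.

End Density.

(* For g of degree k, V(g) is the set
   of directions v along which D_v g has degree < k - 1 (instead of < k). It
   is an additive subgroup of F_2^n, and for v outside it V(D_v g) contains
   both V(g) and the coset V(g) + v, so it is at least twice as large. *)
Section LowDirections.
Variable n : nat.
Implicit Types (g : boolfun n) (v w x : vec n).

Definition deg_ltb k g : bool :=
  [forall u0 : vec n, forall u : {ffun 'I_k -> vec n}, kder g u0 u == 0].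

Lemma deg_ltP k g : reflect (deg_lt k g) (deg_ltb k g).
Proof.
apply: (iffP forallP) => [H u0 u|H u0]; last by apply/forallP => u; rewrite H.
by apply/eqP; move/forallP: (H u0); apply.
Qed.

Definition lowdirs k g : {set vec n} := [set v | deg_ltb k.-1 (dder v g)].

Lemma lowdirsP k g v : reflect (deg_lt k.-1 (dder v g)) (v \in lowdirs k g).
Proof. by rewrite inE; apply: deg_ltP. Qed.

Definition deg_exact k g : Prop := deg_lt k.+1 g /\ ~ deg_lt k g.

Lemma lowdirs0 k g : 0 \in lowdirs k g.
Proof.
apply/lowdirsP; apply: (@deg_lt_ext _ _ (fun _ => 0)); last exact: deg_lt0f.
by move=> x; rewrite dder0.
Qed.

Lemma lowdirsD k g v w : v \in lowdirs k g -> w \in lowdirs k g -> v + w \in lowdirs k g.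
Proof.
move=> /lowdirsP Hv /lowdirsP Hw; apply/lowdirsP.
apply: (@deg_lt_ext _ _ (fun x => dder v g (x + w) + dder w g x)).
  by move=> x; rewrite dderD.
by apply: deg_ltD => //; apply: deg_lt_translate.
Qed.

Lemma lowdirs_dder m g v w : deg_lt m.+2 g ->
  w \in lowdirs m.+1 g -> w \in lowdirs m (dder v g).
Proof.
move=> Hg /lowdirsP Hw; apply/lowdirsP; case: m Hg Hw => [|m] Hg Hw /=.
  by move/deg_ltS: Hg => /(_ v) /deg_ltS /(_ w).
by apply: (@deg_lt_ext _ _ (dder v (dder w g))) => [x|]; [exact: dderC | move/deg_ltS: Hw].
Qed.

Lemma lowdirs_dder_shift m g v w : deg_lt m.+2 g ->
  w + v \in lowdirs m.+1 g -> w \in lowdirs m (dder v g).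
Proof.
move=> Hg /(lowdirs_dder v Hg) /lowdirsP H; apply/lowdirsP.
apply: (@deg_lt_ext _ _ (dder (w + v) (dder v g))) => // x.
have wE : v + (w + v) = w by rewrite addrC vec_addK.
by rewrite -[in RHS]wE (dderD v (w + v)) dder_twice add0r.
Qed.

Lemma card_lowdirs_dder m g v : deg_lt m.+2 g -> v \notin lowdirs m.+1 g ->
  (#|lowdirs m.+1 g| * 2 ^ m.+1 <= #|lowdirs m (dder v g)| * 2 ^ m)%N.
Proof.
move=> Hg vV; rewrite expnS mulnA leq_mul2r [(_ * 2)%N]mulnC; apply/orP; right.
set V := lowdirs m.+1 g; set W := (fun w => w + v) @^-1: V.
have cardW : #|W| = #|V| by rewrite card_preimset //; apply: addIr.
have VW0 : V :&: W = set0.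
  apply/setP => w; rewrite in_setI in_set0; apply/negbTE/negP => /andP [wV].
  rewrite inE => wvV.
  by move: (lowdirsD wV wvV); rewrite addrA vec_addxx add0r (negbTE vV).
have subVW : V :|: W \subset lowdirs m (dder v g).
  apply/subsetP => w; rewrite in_setU => /orP [wV|]; first exact: lowdirs_dder.
  by rewrite inE; apply: lowdirs_dder_shift.
by move: (subset_leq_card subVW); rewrite cardsU VW0 cards0 subn0 cardW mul2n -addnn.
Qed.

Lemma dt_succ_outside m g : dt m.+1 g =
  1 / (2 ^ n)%:R * \sum_(v in ~: lowdirs m.+1 g) dt m (dder v g).
Proof.
rewrite dt_succ (bigID (mem (lowdirs m.+1 g))) /= big1 ?add0r.
  by congr (_ * _); apply: eq_bigl => v; rewrite in_setC.
by move=> v /lowdirsP; apply: dt_deg_lt.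
Qed.

Lemma deg_exact_dder m g v : deg_lt m.+2 g ->
  v \notin lowdirs m.+1 g -> deg_exact m (dder v g).
Proof.
move=> Hg /lowdirsP vV; split => //.
by move/deg_ltS: Hg; apply.
Qed.

Lemma lowdirs_proper m g : ~ deg_lt m.+1 g -> exists v, v \notin lowdirs m.+1 g.
Proof.
move=> Hng; case: (pickP (mem (~: lowdirs m.+1 g))) => [v vV|allV].
  by exists v; rewrite -in_setC.
case: Hng; apply/deg_ltS => v; apply/(lowdirsP m.+1).
by move: (allV v); rewrite /= in_setC => /negbFE.
Qed.

Lemma card_lowdirs_le m g : deg_exact m g -> (#|lowdirs m g| * 2 ^ m <= 2 ^ n)%N.
Proof.
elim: m g => [|m IH] g gex.
  by rewrite muln1 -card_vec max_card.
have [v0 v0V] := lowdirs_proper gex.2.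
apply: leq_trans (IH _ (deg_exact_dder gex.1 v0V)).
by apply: card_lowdirs_dder v0V; case: gex.
Qed.

Lemma card_lowdirs_dder_eq m g v : deg_exact m.+1 g -> v \notin lowdirs m.+1 g ->
  (#|lowdirs m.+1 g| * 2 ^ m.+1 = 2 ^ n)%N ->
  (#|lowdirs m (dder v g)| * 2 ^ m = 2 ^ n)%N.
Proof.
move=> gex vV cardE; have dex := deg_exact_dder gex.1 vV.
apply/eqP; rewrite eqn_leq card_lowdirs_le //= -cardE.
by apply: card_lowdirs_dder vV; case: gex.
Qed.

End LowDirections.

Lemma compl_ratio_le (F : realFieldType) (c N K : nat) :
  (0 < N)%N -> (0 < K)%N -> (c <= N)%N ->
  (1 - 1 / K%:R <= (N - c)%:R / N%:R :> F) = (c * K <= N)%N.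
Proof.
move=> N0 K0 cN; rewrite natrB // mulrBl divff ?pnatr_eq0 -?lt0n // lerD2l lerN2.
by rewrite ler_pdivrMr ?ltr0n // div1r mulrC ler_pdivlMr ?ltr0n // -natrM ler_nat.
Qed.

Lemma compl_ratio_eq (F : realFieldType) (c N K : nat) :
  (0 < N)%N -> (0 < K)%N -> (c <= N)%N ->
  ((N - c)%:R / N%:R == 1 - 1 / K%:R :> F) = (c * K == N)%N.
Proof.
move=> N0 K0 cN; rewrite eq_le compl_ratio_le // andbC eqn_leq; congr (_ && _).
rewrite natrB // mulrBl divff ?pnatr_eq0 -?lt0n // lerD2l lerN2.
by rewrite ler_pdivlMr ?ltr0n // mulrAC ler_pdivrMr ?ltr0n // mul1r -natrM ler_nat.
Qed.

Lemma mean_ge (F : realFieldType) (I : finType) (A : {set I}) (x : I -> F) (p : F)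
    (N : nat) :
  (0 < N)%N -> (forall i, i \in A -> p <= x i) ->
  #|A|%:R / N%:R * p <= 1 / N%:R * \sum_(i in A) x i.
Proof.
move=> N0 px; rewrite mulrAC [1 / _ * _]mulrC mul1r ler_wpM2r ?invr_ge0 ?ler0n //.
by rewrite mulr_natl -sumr_const ler_sum.
Qed.

Section Bounds.
Variable n : nat.
Implicit Types (g : boolfun n) (v x : vec n).

Definition prod_bound k : rat := \prod_(i < k) (1 - 1 / (2 ^ i.+1)%:R).

Lemma prod_bound_gt0 k : 0 < prod_bound k.
Proof.
rewrite /prod_bound; elim/big_ind: _ => // [x y|i _]; first exact: mulr_gt0.
rewrite subr_gt0 ltr_pdivrMr ?pow2_gt0 // mul1r ltr1n.
by rewrite -{1}(expn0 2) ltn_exp2l.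
Qed.

Lemma prod_boundS k : prod_bound k.+1 = (1 - 1 / (2 ^ k.+1)%:R) * prod_bound k.
Proof. by rewrite /prod_bound big_ord_recr [RHS]mulrC. Qed.

Lemma deg_exact0_nonzero g : deg_exact 0 g -> forall x, g x != 0.
Proof.
move=> [g1 g0] x; rewrite (deg_lt1_const g1); apply/eqP => gz.
by apply: g0; apply/deg_lt0 => y; rewrite (deg_lt1_const g1).
Qed.

Lemma lowdirs0_full g : deg_lt 1 g -> lowdirs 0 g = setT.
Proof.
move=> g1; apply/setP => v; rewrite in_setT; apply/lowdirsP/deg_lt0 => x.
by rewrite /dder !(deg_lt1_const g1) F2_addxx.
Qed.

Lemma dt_lower m g : deg_exact m g ->
  prod_bound m <= dt m g /\
  (dt m g = prod_bound m <-> (#|lowdirs m g| * 2 ^ m = 2 ^ n)%N).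
Proof.
elim: m g => [|m IH] g gex.
  rewrite dt0_nonzero; last exact: deg_exact0_nonzero.
  have -> : lowdirs 0 g = setT by apply: lowdirs0_full; case: gex.
  by rewrite /prod_bound big_ord0 cardsT card_vec muln1.
set V := lowdirs m.+1 g; set N := (2 ^ n)%N; set K := (2 ^ m.+1)%N.
have N0 : (0 < N)%N by rewrite expn_gt0.
have K0 : (0 < K)%N by rewrite expn_gt0.
have cardV : (#|V| * K <= N)%N := card_lowdirs_le gex.
have cN : (#|V| <= N)%N by apply: leq_trans cardV; rewrite leq_pmulr.
have cardVC : #|~: V| = (N - #|V|)%N by rewrite cardsCs setCK card_vec.
have IHv v : v \in ~: V -> prod_bound m <= dt m (dder v g) /\
    (dt m (dder v g) = prod_bound m <->
     (#|lowdirs m (dder v g)| * 2 ^ m = 2 ^ n)%N).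
  by rewrite in_setC => vV; apply/IH/deg_exact_dder => //; case: gex.
have mean : (N - #|V|)%:R / N%:R * prod_bound m <= dt m.+1 g.
  by rewrite dt_succ_outside -cardVC; apply: mean_ge => // v /IHv [].
have ratio : 1 - 1 / K%:R <= (N - #|V|)%:R / N%:R :> rat by rewrite compl_ratio_le.
have p0 := prod_bound_gt0 m.
split; first by rewrite prod_boundS; apply: le_trans mean; rewrite ler_pM2r.
split=> [dtE|cardE].
  apply/eqP; rewrite -(@compl_ratio_eq rat #|V| N K) // eq_le ratio andbT.
  by move: mean; rewrite dtE prod_boundS ler_pM2r.
have extremal v : v \in ~: V -> dt m (dder v g) = prod_bound m.
  move=> vVC; apply/(IHv v vVC).2; move: vVC; rewrite in_setC => vV.
  exact: card_lowdirs_dder_eq.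
move/eqP: cardE; rewrite -(@compl_ratio_eq rat #|V| N K) // => /eqP ratioE.
rewrite prod_boundS -/K -ratioE dt_succ_outside (eq_bigr _ extremal).
by rewrite sumr_const cardVC -[prod_bound m *+ _]mulr_natl mul1r mulrA [_^-1 * _]mulrC.
Qed.

(* For g of degree <= 1, D_v g is the constant 1 for v outside V(g), and
   translating by one such v0 maps the complement of V(g) into V(g). *)
Lemma card_lowdirs1C g : deg_lt 2 g -> (#|~: lowdirs 1 g| <= #|lowdirs 1 g|)%N.
Proof.
move=> g2; set V := lowdirs 1 g.
have one v x : v \notin V -> dder v g x = 1.
  by move=> /(deg_exact_dder g2) /deg_exact0_nonzero /(_ x) /F2_neq0.
case: (set_0Vmem (~: V)) => [->|[v0]]; first by rewrite cards0.
rewrite in_setC => v0V; rewrite -(card_imset (~: V) (addIr v0)).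
apply/subset_leq_card/subsetP => y /imsetP [w]; rewrite in_setC => wV ->.
by apply/lowdirsP/deg_lt0 => x; rewrite dderD !one ?F2_addxx.
Qed.

Lemma dt1_le_half g : deg_lt 2 g -> dt 1 g <= 1 / 2.
Proof.
move=> g2; rewrite dt_succ_outside; set V := lowdirs 1 g.
have one v : v \in ~: V -> dt 0 (dder v g) = 1.
  by rewrite in_setC => /(deg_exact_dder g2) /deg_exact0_nonzero /dt0_nonzero.
have VC_le_V : (#|~: V| <= #|V|)%N := card_lowdirs1C g2.
have := cardsC V; rewrite card_vec => cardV.
rewrite (eq_bigr _ one) sumr_const mul1r mulrC ler_pdivrMr ?pow2_gt0 // mul1r mulrC.
by rewrite ler_pdivlMr ?ltr0n // -natrM ler_nat -cardV muln2 -addnn leq_add2r.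
Qed.

(* The upper bound dt_{m+1}(g) <= 1/2 (1 - 2^-n)^m for deg g <= m+1: the
   direction v = 0 never contributes to the recursion. *)
Lemma dt_upper m g : deg_lt m.+2 g ->
  dt m.+1 g <= 1 / 2 * (1 - 1 / (2 ^ n)%:R) ^+ m.
Proof.
elim: m g => [|m IH] g g2; first by rewrite expr0 mulr1 dt1_le_half.
pose B : rat := 1 / 2 * (1 - 1 / (2 ^ n)%:R) ^+ m.
have dt_dder0 : dt m.+1 (dder 0 g) = 0.
  apply: dt_deg_lt; apply: (@deg_lt_ext _ _ (fun _ => 0)); last exact: deg_lt0f.
  by move=> x; rewrite dder0.
have N0 : (0 < 2 ^ n)%N by rewrite expn_gt0.
rewrite dt_succ (bigD1 0) //= dt_dder0 add0r.
apply: (@le_trans _ _ (1 / (2 ^ n)%:R * \sum_(v in predC1 0) B)).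
  rewrite ler_wpM2l ?divr_ge0 ?ler0n // (eq_bigl (fun v => v \in predC1 0)) //.
  apply: ler_sum => v _.
  by apply: IH; move/deg_ltS: g2.
rewrite sumr_const cardC1 card_vec -[B *+ _]mulr_natr -subn1 natrB // exprS /B.
rewrite le_eqVlt; apply/orP; left; apply/eqP.
by field; rewrite pnatr_eq0 -lt0n.
Qed.

End Bounds.

Section Subspaces.
Variable n : nat.
Implicit Types (V : {set vec n}).

Lemma complete_row_base m (A : 'M['F_2]_(m, n)) :
  exists P : 'M['F_2]_n, P \in unitmx /\
    forall x : 'I_n, (n - \rank A <= x)%N -> (row x P <= A)%MS.
Proof.
have rankE : (\rank (A^C)%MS + \rank A = n)%N.
  by rewrite mxrank_compl subnK // rank_leq_col.
set Q := col_mx (row_base (A^C)%MS) (row_base A).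
exists (castmx (rankE, erefl n) Q); split.
  rewrite -row_full_unit /row_full (eqmx_cast Q (rankE, erefl n)).
  rewrite -(addsmxE (row_base (A^C)%MS) (row_base A)).
  rewrite (adds_eqmx (eq_row_base (A^C)%MS) (eq_row_base A)) addsmxC.
  exact: addsmx_compl_full.
move=> x hx; have hxC : (\rank (A^C)%MS <= x)%N by rewrite mxrank_compl.
have hj : (x - \rank (A^C)%MS < \rank A)%N.
  by rewrite ltn_subLR // rankE ltn_ord.
have -> : row x (castmx (rankE, erefl n) Q) = row (Ordinal hj) (row_base A).
  apply/matrixP => i j; rewrite [LHS]mxE [RHS]mxE castmxE /=.
  have -> : cast_ord (esym rankE) x = rshift (\rank (A^C)%MS) (Ordinal hj).
    by apply/val_inj => /=; rewrite subnKC.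
  by rewrite cast_ord_id /Q col_mxEd.
by apply: submx_trans (row_sub _ _) _; rewrite eq_row_base.
Qed.

Definition rows_of V : 'M['F_2]_(#|V|, n) :=
  \matrix_(i < #|V|, j < n) (enum_val i : vec n) j 0.

Lemma row_rows_of V i : (row i (rows_of V))^T = enum_val i.
Proof. by apply/matrixP => a b; rewrite !mxE (ord1 b). Qed.

Lemma card_le_rank V : (#|V| <= 2 ^ \rank (rows_of V))%N.
Proof.
set B := row_base (rows_of V).
have sub : V \subset [set (w *m B)^T | w : 'rV_(\rank (rows_of V))].
  apply/subsetP => v vV.
  have /submxP [w wE] : (row (enum_rank_in vV v) (rows_of V) <= B)%MS.
    by rewrite eq_row_base row_sub.
  by apply/imsetP; exists w; rewrite // -wE row_rows_of enum_rankK_in.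
apply: leq_trans (subset_leq_card sub) _; apply: leq_trans (leq_imset_card _ _) _.
by rewrite card_mx card_Fp // mul1n.
Qed.

Section AdditiveSet.
Variable V : {set vec n}.
Hypothesis V0 : 0 \in V.
Hypothesis VD : forall a b, a \in V -> b \in V -> a + b \in V.

Lemma rowspace_rows_of (r : 'rV_n) : (r <= rows_of V)%MS -> r^T \in V.
Proof.
case/submxP => D ->; rewrite mulmx_sum_row.
apply: (big_ind (fun r : 'rV_n => r^T \in V)); first by rewrite trmx0.
  by move=> a b Ha Hb; rewrite linearD; apply: VD.
move=> i _; case: (F2_cases (D 0 i)) => ->; first by rewrite scale0r trmx0.
by rewrite scale1r row_rows_of enum_valP.
Qed.

Lemma large_set_basis k : (2 ^ n <= #|V| * 2 ^ k)%N ->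
  exists M : 'M['F_2]_n, M \in unitmx /\
    forall x : 'I_n, (k <= x)%N -> M *m delta_mx x 0 \in V.
Proof.
move=> cardV; have rank_ge : (n - \rank (rows_of V) <= k)%N.
  rewrite leq_subLR -(@leq_exp2l 2) // expnD.
  by apply: leq_trans cardV _; rewrite leq_mul2r card_le_rank orbT.
have [P [Pu HP]] := complete_row_base (rows_of V).
exists P^T; split; first by rewrite unitmx_tr.
move=> x hx; rewrite -colE -tr_row; apply/rowspace_rows_of/HP.
exact: leq_trans rank_ge hx.
Qed.

End AdditiveSet.
End Subspaces.

Section Invariance.
Variable n : nat.
Implicit Types (f g h : boolfun n) (v w x : vec n).

Lemma dder_affine f (M : 'M['F_2]_n) w v x :
  dder v (fun y => f (M *m y + w)) x = dder (M *m v) f (M *m x + w).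
Proof. by rewrite /dder mulmxDr addrAC. Qed.

Lemma lowdirs_ext m g h : (forall x, g x = h x) -> lowdirs m g = lowdirs m h.
Proof.
by move=> E; apply/setP => v; apply/lowdirsP/lowdirsP; apply: deg_lt_ext => x;
  rewrite /dder !E.
Qed.

Lemma lowdirs_congr m g h : deg_lt m.+1 (fun x => g x + h x) ->
  lowdirs m.+1 g \subset lowdirs m.+1 h.
Proof.
move=> /deg_ltS gh; apply/subsetP => v /lowdirsP Hv; apply/lowdirsP.
apply: (@deg_lt_ext _ _ (fun x => dder v (fun y => g y + h y) x + dder v g x)).
  by move=> x; rewrite /dder F2_add_cancel.
exact: deg_ltD.
Qed.

(* M maps V(f o (M . + w)) injectively into V(f) *)
Lemma card_lowdirs_affine m f (M : 'M['F_2]_n) w : M \in unitmx ->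
  (#|lowdirs m (fun x => f (M *m x + w)%R)| <= #|lowdirs m f|)%N.
Proof.
move=> Mu; rewrite -(card_imset _ (can_inj (mulKmx Mu))).
apply/subset_leq_card/subsetP => _ /imsetP [v /lowdirsP Hv ->]; apply/lowdirsP.
apply: (deg_lt_affine_inv (w := w) Mu); apply: deg_lt_ext Hv => x.
by rewrite dder_affine.
Qed.

End Invariance.

Section EqualityCase.
Variables (n k' : nat).
Hypothesis kn : (k'.+1 <= n)%N.
Local Notation k := k'.+1.
Implicit Types (f g h : boolfun n) (x : vec n) (S : {set 'I_n}).

Definition lead_vars : {set 'I_n} := [set i : 'I_n | (i < k)%N].

Lemma monomE x : monom k x = monomial lead_vars x.
Proof. by apply: eq_bigl => i; rewrite inE. Qed.

Lemma card_lead_vars : #|lead_vars| = k.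
Proof.
have -> : lead_vars = widen_ord kn @: [set: 'I_k].
  apply/setP => i; rewrite inE; apply/idP/imsetP => [hi|[j _ ->]]; last exact: (ltn_ord j).
  by exists (Ordinal hi) => //; apply/val_inj.
rewrite card_imset ?cardsT ?card_ord //.
by move=> a b /(congr1 val) /= E; apply/val_inj.
Qed.

Definition tail_vecs : {set vec n} :=
  [set x : vec n | [forall i : 'I_n, (i < k)%N ==> (x i 0 == 0)]].

Lemma card_tail_vecs : (2 ^ (n - k) <= #|tail_vecs|)%N.
Proof.
have nE : (k + (n - k) = n)%N by rewrite subnKC.
pose ext (y : 'cV['F_2]_(n - k)) : vec n := castmx (nE, erefl 1%N) (col_mx 0 y).
have ext_inj : injective ext.
  move=> y1 y2 /matrixP E; apply/matrixP => i j.
  by have := E (cast_ord nE (rshift k i)) j; rewrite !castmxE cast_ordK !cast_ord_id !col_mxEd.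
have card_img : #|ext @: [set: 'cV_(n - k)]| = (2 ^ (n - k))%N.
  by rewrite card_imset // cardsT card_mx card_Fp // muln1.
rewrite -card_img subset_leq_card //.
apply/subsetP => _ /imsetP [y _ ->]; rewrite inE; apply/forallP => i.
apply/implyP => ik; rewrite castmxE cast_ord_id.
have -> : cast_ord (esym nE) i = lshift (n - k) (Ordinal ik) by apply/val_inj.
by rewrite col_mxEu mxE.
Qed.

Lemma tail_vecs_lowdirs : tail_vecs \subset lowdirs k (monom k).
Proof.
apply/subsetP => v; rewrite inE => /forallP vtail; apply/lowdirsP.
apply: (@deg_lt_ext _ _ (fun _ => 0)); last exact: deg_lt0f.
move=> x; rewrite /dder.
have -> : monom k (x + v) = monom k x.
  apply: eq_bigr => i ik; rewrite mxE.
  by move/implyP: (vtail i) => /(_ ik) /eqP ->; rewrite addr0.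
by rewrite F2_addxx.
Qed.

Lemma card_lowdirs_affeq f : (#|lowdirs k f| * 2 ^ k <= 2 ^ n)%N ->
  affeq_mod k' f (monom k) -> (#|lowdirs k f| * 2 ^ k = 2 ^ n)%N.
Proof.
move=> cardV [h [[M [w [Mu hE]]] /deg_leP mh]].
have nE : (2 ^ n = 2 ^ (n - k) * 2 ^ k)%N by rewrite -expnD subnK.
apply/eqP; rewrite eqn_leq cardV nE leq_mul2r expn_eq0 /=.
apply: leq_trans card_tail_vecs _; apply: leq_trans (subset_leq_card tail_vecs_lowdirs) _.
apply: leq_trans (subset_leq_card (lowdirs_congr mh)) _.
by rewrite (lowdirs_ext _ hE) card_lowdirs_affine.
Qed.

Lemma top_coef_lead h : deg_lt k.+1 h ->
  (forall S, #|S| = k -> S != lead_vars -> coef h S = 0) ->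
  forall S, (k' < #|S|)%N -> coef h S = (S == lead_vars)%:R * coef h lead_vars.
Proof.
move=> h1 hS S; rewrite leq_eqVlt => /orP [/eqP cS|cS].
  case: (eqVneq S lead_vars) => [->|SK]; first by rewrite mul1r.
  by rewrite mul0r hS.
have SK : S != lead_vars by apply: contraTneq cS => ->; rewrite card_lead_vars ltnn.
by rewrite (negbTE SK) mul0r (coef_deg_lt h1).
Qed.

Lemma deg_le_add_lead h : deg_exact k h ->
  (forall S, #|S| = k -> S != lead_vars -> coef h S = 0) ->
  deg_le (fun x => monom k x + h x) k'.
Proof.
move=> [h1 h0] hS; have top := top_coef_lead h1 hS.
have lead1 : coef h lead_vars = 1.
  apply/F2_neq0/eqP => lead0; apply/h0/deg_leP/deg_le_coef => S /top ->.
  by rewrite lead0 mulr0.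
apply: deg_le_coef => S /top hSE.
rewrite coefD (coef_ext S monomE) coef_monomial hSE lead1 mulr1 eq_sym.
by case: (S == lead_vars); rewrite ?F2_addxx ?addr0.
Qed.

(* |V(f)| = 2^(n-k) gives f ~_(k-1) x_1 ... x_k: after a change of variables
   sending e_k, ..., e_(n-1) into V(f), every variable x_j with j >= k lowers
   the degree, so only the coefficient of x_1 ... x_k survives in degree k. *)
Lemma affeq_card_lowdirs f : deg_exact k f ->
  (#|lowdirs k f| * 2 ^ k = 2 ^ n)%N -> affeq_mod k' f (monom k).
Proof.
move=> [f1 f0] cardE.
have [M [Mu HM]] := large_set_basis (lowdirs0 k f) (@lowdirsD _ k f) (eq_leq (esym cardE)).
pose h x := f (M *m x + 0).
have hex : deg_exact k h.
  split; first exact: deg_lt_affine.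
  by move=> /(deg_lt_affine_inv Mu).
have low_dirs (j : 'I_n) : (k <= j)%N -> deg_lt k' (dder (delta_mx j 0) h).
  move=> /HM /lowdirsP /(deg_lt_affine M 0); apply: deg_lt_ext => x.
  by rewrite dder_affine.
exists h; split; first by exists M, 0.
apply: deg_le_add_lead => // S cS SK.
have /subsetPn [j jS] : ~~ (S \subset lead_vars).
  by apply: contra SK => sub; rewrite eqEcard sub card_lead_vars cS /=.
by rewrite inE -leqNgt => /low_dirs; apply: coef_dder_deg_lt.
Qed.

End EqualityCase.

Theorem theorem2 (n k : nat) (f : 'cV['F_2]_n -> 'F_2) :
  (1 <= k)%N -> (k <= n)%N -> deg_eq f k ->
  [/\ \prod_(i < k) (1 - 1 / (2 ^ i.+1)%:R) <= dt k f,
      dt k f <= 1 / 2 * (1 - 1 / (2 ^ n)%:R) ^+ k.-1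
    & dt k f = \prod_(i < k) (1 - 1 / (2 ^ i.+1)%:R :> rat)
        <-> affeq_mod k.-1 f (@monom n k)].
Proof.
case: k => [|k] // _ kn [/deg_leP f_le f_gt].
have fex : deg_exact k.+1 f by split => // /deg_leP.
have [lower eq_case] := dt_lower fex.
split => //; first exact: dt_upper.
rewrite eq_case; split; first exact: affeq_card_lowdirs.
exact: card_lowdirs_affeq (card_lowdirs_le fex).
Qed.
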